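(* Let $(S,\mathcal{E}^Q)$ be a quantitative evidence frame with $\mathcal{E}^Q=\{(E_1,p_1),\dots,(E_m,p_m)\}$, $p_j\in(0,1)$ for all $j$. Let $d:2^{\mathcal{E}}\to\tau_{\mathcal{E}}$ be given by $d(\emptyset)=S$ and, for nonempty $\mathbf{E}\subseteq\mathcal{E}$, $d(\mathbf{E})$ the least (w.r.t. inclusion) element of $\tau_{\mathbf{E}}$ that is dense in $\bigcup\mathbf{E}$ w.r.t. $\tau_{\mathbf{E}}$ (such a least element exists). Let $\mathcal{J}_{SD}$ be the set of all $D\in\tau_{\mathcal{E}}$ such that $D\cap T\neq\emptyset$ for all nonempty $T\in\tau_{\mathcal{E}}$. Let $B:2^S\to\{0,1\}$ be defined by $B(P)=1$ iff there exists $D\in\tau_{\mathcal{E}}$ with $D\subseteq P$ and $D\cap T\neq\emptyset$ for all $T\in\tau_{\mathcal{E}}\setminus\{\emptyset\}$. Then for every $P\subseteq S$: $B(P)=1$ if and only if $\mathrm{Bel}_{\mathcal{J}_{SD}}(d,P)>0$.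
   Context: A quantitative evidence frame is a pair $(S,\mathcal{E}^Q)$ where $S$ is a finite nonempty set and $\mathcal{E}^Q=\{(E_1,p_1),\dots,(E_m,p_m)\}$ with $E_1,\dots,E_m$ distinct, $p_j\in(0,1)$, and $\mathcal{E}=\{E_1,\dots,E_m\}$ a nonempty family of subsets of $S$ with $\emptyset\notin\mathcal{E}$, $S\notin\mathcal{E}$. For $\mathbf{E}\subseteq 2^S$, $\tau_{\mathbf{E}}$ is the topology on $S$ generated by $\mathbf{E}$: $\emptyset$, $S$, all finite intersections of members of $\mathbf{E}$, and all unions of such. For $\mathbf{E}\subseteq\mathcal{E}$, $D\in\tau_{\mathbf{E}}$ is dense in $\bigcup\mathbf{E}$ w.r.t. $\tau_{\mathbf{E}}$ if $D\cap T\neq\emptyset$ for all nonempty $T\in\tau_{\mathbf{E}}$. Define $\delta(\mathbf{E})=\prod_{E_j\in\mathbf{E}}p_j\prod_{E_j\notin\mathbf{E}}(1-p_j)$ for $\mathbf{E}\subseteq\mathcal{E}$; for $f:2^{\mathcal{E}}\to\tau_{\mathcal{E}}$, $\delta_\tau(f,T)=\sum_{\mathbf{E}\subseteq\mathcal{E}:\,f(\mathbf{E})=T}\delta(\mathbf{E})$ if $T\in\tau_{\mathcal{E}}$ and $0$ otherwise; for $\mathcal{J}\subseteq\tau_{\mathcal{E}}$, $\delta_{\mathcal{J}}(f,A)=\delta_\tau(f,A)/\sum_{T\in\mathcal{J}}\delta_\tau(f,T)$ if $A\in\mathcal{J}$ and $0$ otherwise; $\mathrm{Bel}_{\mathcal{J}}(f,P)=\sum_{A\subseteq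 P}\delta_{\mathcal{J}}(f,A)$. *)

From HB Require Import structures.
From mathcomp Require Import all_boot all_order all_algebra.
Set Implicit Arguments. Unset Strict Implicit. Unset Printing Implicit Defensive.
Import Order.TTheory GRing.Theory Num.Theory.

Section Defs.
Variable S : finType.

(* topology on S generated by a family F : unions of finite intersections of
   members of F (empty intersection = S, empty union = set0) *)
Definition basics (F : {set {set S}}) : {set {set S}} :=
  [set (\bigcap_(X in G) X) | G : {set {set S}} in powerset F].
Definition tau (F : {set {set S}}) : {set {set S}} :=
  [set (\bigcup_(B in H) B) | H : {set {set S}} in powerset (basics F)].

Definition dense (F : {set {set S}}) (D : {set S}) : bool :=
  (D \in tau F) && [forall T in tau F, (T != set0) ==> (D :&: T != set0)].

Variable m : nat.
Variable E : 'I_m -> {set S}.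

Definition fam (I : {set 'I_m}) : {set {set S}} := E @: I.
Definition tauE : {set {set S}} := tau (fam setT).

Definition least_dense (I : {set 'I_m}) : {set S} :=
  match [pick D | dense (fam I) D &&
           [forall D', dense (fam I) D' ==> (D \subset D')]] with
  | Some D => D
  | None => setT
  end.
Definition dmap (I : {set 'I_m}) : {set S} :=
  if I == set0 then setT else least_dense I.

Definition J_SD : {set {set S}} := [set D | dense (fam setT) D].

Definition Bfun (P : {set S}) : bool :=
  [exists D, dense (fam setT) D && (D \subset P)].

Local Open Scope ring_scope.
Variable R : realFieldType.
Variable p : 'I_m -> R.

Definition delta (I : {set 'I_m}) : R :=
  (\prod_(j in I) p j) * (\prod_(j in ~: I) (1 - p j)).
Definition delta_tau (f : {set 'I_m} -> {set S}) (T : {set S}) : R :=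
  if T \in tauE then \sum_(I : {set 'I_m} | f I == T) delta I else 0.
Definition delta_J (J : {set {set S}}) (f : {set 'I_m} -> {set S}) (A : {set S}) : R :=
  if A \in J then delta_tau f A / (\sum_(T in J) delta_tau f T) else 0.
Definition Bel (J : {set {set S}}) (f : {set 'I_m} -> {set S}) (P : {set S}) : R :=
  \sum_(A : {set S} | A \subset P) delta_J J f A.
End Defs.

From HB Require Import structures.
From mathcomp Require Import all_boot all_order all_algebra.
Set Implicit Arguments. Unset Strict Implicit. Unset Printing Implicit Defensive.
Import Order.TTheory GRing.Theory Num.Theory.
Local Open Scope ring_scope.

(* The dense open sets of a finite topology are closed under intersection, so
   the least dense open set of the whole frame exists and equals [d(E)].  As
   every [delta] is positive, [Bel_J(d, P) > 0] holds exactly when some open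
   value [d(I)] lies in [J] and inside [P]; for [J = J_SD] the value [d(E)] is such a
   witness as soon as some dense open set lies inside [P], and conversely any
   witness is itself a dense open set inside [P]. *)

Section Topology.
Variables (S : finType) (F : {set {set S}}).

Lemma tauT : setT \in tau F.
Proof.
apply/imsetP; exists [set setT]; last by rewrite big_set1.
rewrite inE sub1set; apply/imsetP; exists set0; first by rewrite inE sub0set.
by rewrite big_set0.
Qed.

Lemma tauI A B : A \in tau F -> B \in tau F -> A :&: B \in tau F.
Proof.
move=> /imsetP[HA /[!inE] sHA ->] /imsetP[HB /[!inE] sHB ->].
apply/imsetP; exists [set X :&: Y | X in HA, Y in HB].
  rewrite inE; apply/subsetP => _ /imset2P[X Y XA YB ->].
  have /imsetP[GX /[!inE] sGX ->] := subsetP sHA X XA.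
  have /imsetP[GY /[!inE] sGY ->] := subsetP sHB Y YB.
  apply/imsetP; exists (GX :|: GY); last by rewrite bigcap_setU.
  by rewrite inE subUset sGX sGY.
apply/setP => x; rewrite inE; apply/andP/bigcupP.
  case=> /bigcupP[X XA xX] /bigcupP[Y YB xY]; exists (X :&: Y).
    by apply/imset2P; exists X Y.
  by rewrite inE xX.
case=> _ /imset2P[X Y XA YB ->] /setIP[xX xY].
by split; apply/bigcupP; [exists X | exists Y].
Qed.

Lemma denseT : dense F setT.
Proof.
by rewrite /dense tauT /=; apply/forall_inP => T _; rewrite setTI implybb.
Qed.

Lemma denseI A B : dense F A -> dense F B -> dense F (A :&: B).
Proof.
move=> /andP[At /forall_inP dA] /andP[Bt /forall_inP dB].
rewrite /dense tauI //; apply/forall_inP => T Tt; apply/implyP => T0.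
by rewrite -setIA (implyP (dA _ (tauI Bt Tt))) // (implyP (dB _ Tt)).
Qed.

Lemma dense_bigcap : dense F (\bigcap_(D | dense F D) D).
Proof. by apply: (big_ind (dense F)); [exact: denseT | exact: denseI |]. Qed.

End Topology.

Section LeastDense.
Variables (S : finType) (m : nat) (E : 'I_m -> {set S}).

Lemma least_denseP I :
  dense (fam E I) (least_dense E I) /\
  forall D, dense (fam E I) D -> least_dense E I \subset D.
Proof.
rewrite /least_dense; case: pickP => [D /andP[dD /forall_inP minD] | none].
  by split=> // D' /minD.
suff : false by [].
rewrite -(none (\bigcap_(D | dense (fam E I) D) D)) dense_bigcap /=.
by apply/forall_inP => D; exact: bigcap_inf.
Qed.

Lemma dmap_setT : (0 < m)%N -> dmap E setT = least_dense E setT.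
Proof.
move=> m_gt0; rewrite /dmap; case: eqP => // /setP/(_ (Ordinal m_gt0)).
by rewrite !inE.
Qed.

End LeastDense.

Section Belief.
Variables (S : finType) (m : nat) (E : 'I_m -> {set S}).
Variables (R : realFieldType) (p : 'I_m -> R).
Hypothesis p01 : forall j, 0 < p j < 1.

Lemma delta_gt0 I : 0 < delta p I.
Proof.
by apply: mulr_gt0; apply: prodr_gt0 => j _; case/andP: (p01 j) => ? ?;
  rewrite ?subr_gt0.
Qed.

Lemma delta_tau_ge0 f T : 0 <= delta_tau E p f T.
Proof.
rewrite /delta_tau; case: ifP => // _.
by apply: sumr_ge0 => I _; exact/ltW/delta_gt0.
Qed.

Lemma delta_tau_gt0 f I : f I \in tauE E -> 0 < delta_tau E p f (f I).
Proof.
move=> fIt; rewrite /delta_tau fIt (bigD1 I) //=.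
by apply: ltr_wpDr; [apply: sumr_ge0 => J _; exact/ltW/delta_gt0 | exact: delta_gt0].
Qed.

Lemma Bel_gt0 J f P :
  0 < Bel E p J f P <-> exists I, [/\ f I \in J, f I \in tauE E & f I \subset P].
Proof.
split=> [Bel_pos | [I [fIJ fIt fIP]]].
  case: (pickP [pred I | [&& f I \in J, f I \in tauE E & f I \subset P]]).
    by move=> I /and3P[]; exists I.
  move=> none; move: Bel_pos; rewrite /Bel big1 ?ltxx // => A AP.
  rewrite /delta_J /delta_tau; case: ifP => // AJ; case: ifP => At.
    rewrite big_pred0 ?mul0r // => I; apply: contraFF (none I) => /eqP fIA.
    by rewrite /= fIA AJ At AP.
  by rewrite mul0r.
have dt_gt0 := delta_tau_gt0 fIt.
have Z_ge0 (X : pred {set S}) : 0 <= \sum_(T | X T) delta_tau E p f T.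
  by apply: sumr_ge0 => T _; exact: delta_tau_ge0.
rewrite /Bel (bigD1 (f I)) //=; apply: ltr_wpDr.
  apply: sumr_ge0 => A _; rewrite /delta_J; case: ifP => // _.
  exact: divr_ge0 (delta_tau_ge0 _ _) (Z_ge0 _).
rewrite /delta_J fIJ; apply: divr_gt0 => //.
by rewrite (bigD1 (f I)) //=; apply: ltr_wpDr.
Qed.

End Belief.

(* Only [0 < m] (so that [setT != set0]) and [0 < p j < 1] are used. *)
Theorem proposition6 (R : realFieldType) (S : finType) (m : nat)
  (E : 'I_m -> {set S}) (p : 'I_m -> R) :
  (0 < #|S|)%N ->
  (0 < m)%N ->
  injective E ->
  (forall j, E j != set0) ->
  (forall j, E j != setT) ->
  (forall j, 0 < p j < 1) ->
  forall P : {set S},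
    Bfun E P <-> 0 < Bel E p (J_SD E) (dmap E) P.
Proof.
move=> _ m_gt0 _ _ _ p01 P; split.
  case/existsP=> D /andP[dD DP]; have [dD0 minD0] := least_denseP E setT.
  apply/(Bel_gt0 E p01); exists setT.
  rewrite dmap_setT // inE dD0 (subset_trans (minD0 _ dD) DP).
  by case/andP: dD0.
case/(Bel_gt0 E p01)=> I [/[!inE] dI _ IP]; apply/existsP; exists (dmap E I).
by rewrite dI IP.
Qed.
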